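(* Let $r>0$ and let $f\in\mathcal S(\mathbb{R}^2)$. Let $g=\mathcal F f$ be its equidistant-detector fan-beam transform with source radius $r$, i.e. for $(s,\beta)\in\mathbb{R}\times\mathbb{R}$, $$g(s,\beta)=\int_0^\infty f\Big(r\theta_\beta+t\,\frac{s\theta_\beta^\perp-r\theta_\beta}{\|s\theta_\beta^\perp-r\theta_\beta\|_2}\Big)\,dt,\qquad \theta_\beta=(\cos\beta,\sin\beta),\ \theta_\beta^\perp=(-\sin\beta,\cos\beta).$$ Let $h^*\in\mathbb{R}$ and define the misaligned sinogram $\tilde g(s,\beta)=g(s-h^*,\beta)$. Define, for $s\in\mathbb{R}$, $$\tilde p(s)=\int_0^{2\pi}\tilde g(s,\beta)\,d\beta,\qquad w(s)=\int_0^{2\pi}\tilde g\Big(-s,\ \beta+\pi+2\arctan\frac{s}{r}\Big)\,d\beta .$$ Then $\tilde p(s)=w(s-2h^* )$ for all $s\in\mathbb{R}$.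
   Context: $\mathcal S(\mathbb{R}^2)$ denotes the Schwartz space of rapidly decreasing functions on $\mathbb{R}^2$. The fan-beam transform $g=\mathcal F f$ gives the integral of $f$ along the ray starting at the source point $r\theta_\beta$ and passing through the detector point $s\theta_\beta^\perp$ (the detector coordinate axis passes through the origin); the angle $\beta$ is the polar angle of the source direction, so $g$ and $\tilde g$ are $2\pi$-periodic in $\beta$. The translation $\tilde g(s,\beta)=g(s-h^*,\beta)$ models a shift of the center of rotation by the (unknown) amount $h^*$ along the detector. *)

From Stdlib Require Import Reals List.
From Coquelicot Require Import Coquelicot.
Open Scope R_scope.

(* Iterated partial derivatives of f : R -> R -> R indexed by a word:
   true = d/dx, false = d/dy; the head of the list is applied last. *)
Fixpoint Dw (w : list bool) (f : R -> R -> R) : R -> R -> R :=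
  match w with
  | nil => f
  | b :: w' =>
      let g := Dw w' f in
      if b then (fun x y => Derive (fun t => g t y) x)
      else (fun x y => Derive (fun t => g x t) y)
  end.

Definition schwartz (f : R -> R -> R) : Prop :=
  (forall w x y,
      ex_derive (fun t => Dw w f t y) x /\ ex_derive (fun t => Dw w f x t) y) /\
  (forall w x y,
      continuous (fun p : R * R => Dw w f (fst p) (snd p)) (x, y)) /\
  (forall w (a b : nat), exists C : R,
      forall x y, Rabs (x ^ a * y ^ b * Dw w f x y) <= C).

Definition fanbeam (r : R) (f : R -> R -> R) (s beta : R) : R :=
  let dx := - s * sin beta - r * cos beta in
  let dy := s * cos beta - r * sin beta in
  let N := sqrt (dx ^ 2 + dy ^ 2) in
  RInt_gen (fun t => f (r * cos beta + t * (dx / N)) (r * sin beta + t * (dy / N)))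
    (at_point 0) (Rbar_locally p_infty).

From Stdlib Require Import Reals Lra Psatz FunctionalExtensionality.
From Coquelicot Require Import Coquelicot.
Open Scope R_scope.

(* Rotate coordinates by the source angle [beta]: the fan-beam integrand becomes
   [t |-> f (R_beta gamma(t))] for one fixed ray [gamma].  Replacing the detector
   coordinate [u] by [-u] reflects [gamma(t)] in the first axis, and shifting
   [beta] by [c] rotates it; neither changes [|gamma(t)|].  For fixed [t], the
   integral of [f (R_beta v)] over a period of [beta] only depends on [|v|], so
   both integrands have the same angular integrals.  The Schwartz bound makes
   [f (R_beta gamma(t))] uniformly [O(1/(1+t)^2)], which justifies exchanging the
   angular integral with the improper integral in [t]. *)

Definition continuous2 (h : R -> R -> R) : Prop :=
  forall x y, continuous (fun z : R * R => h (fst z) (snd z)) (x, y).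

Lemma continuous2_swap (h : R -> R -> R) :
  continuous2 h -> continuous2 (fun x y => h y x).
Proof.
  intros Hh x y.
  apply (continuous_comp_2 snd fst h (x, y)).
  - apply continuous_snd.
  - apply continuous_fst.
  - apply Hh.
Qed.

Lemma continuous2_l (h : R -> R -> R) y x :
  continuous2 h -> continuous (fun x => h x y) x.
Proof.
  intros Hh.
  apply (continuous_comp_2 (fun x => x) (fun _ => y) h x).
  - apply continuous_id.
  - apply continuous_const.
  - apply Hh.
Qed.

Lemma continuous2_r (h : R -> R -> R) x y :
  continuous2 h -> continuous (fun y => h x y) y.
Proof. intros Hh. apply (continuous2_l (fun y x => h x y)), continuous2_swap, Hh. Qed.

Lemma continuous2_mult (u v : R -> R) :
  (forall x, continuous u x) -> (forall y, continuous v y) ->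
  continuous2 (fun x y => u x * v y).
Proof.
  intros Hu Hv x y.
  apply (continuous_mult (fun z : R * R => u (fst z)) (fun z : R * R => v (snd z))).
  - apply (continuous_comp fst u); [apply continuous_fst | apply Hu].
  - apply (continuous_comp snd v); [apply continuous_snd | apply Hv].
Qed.

Lemma ex_RInt_continuous2_l (h : R -> R -> R) y a b :
  continuous2 h -> ex_RInt (fun x => h x y) a b.
Proof.
  intros Hh. apply (@ex_RInt_continuous R_CompleteNormedModule).
  intros x _. apply continuous2_l, Hh.
Qed.

Lemma continuous_RInt_param (h : R -> R -> R) a b c :
  continuous2 h -> continuous (fun y => RInt (fun x => h x y) a b) c.
Proof.
  intros Hh. apply filterlim_locally. intros eps.
  set (L := Rabs (b - a)).
  assert (HL : 0 <= L) by apply Rabs_pos.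
  assert (Heps : 0 < eps / (L + 1)) by (apply Rdiv_lt_0_compat; [apply cond_pos | lra]).
  destruct (uniform_continuity_2d_1d h (Rmin a b) (Rmax a b) c
              (fun x _ => proj2 (continuity_2d_pt_filterlim h x c) (Hh x c))
              (mkposreal _ Heps)) as [d Hd].
  exists d. intros y Hy.
  change (Rabs (RInt (fun x => h x y) a b - RInt (fun x => h x c) a b) < eps).
  rewrite <- (RInt_minus (fun x => h x y) (fun x => h x c))
    by apply ex_RInt_continuous2_l, Hh.
  apply Rle_lt_trans with (L * (eps / (L + 1))).
  - apply (norm_RInt_le_const_abs (fun x => h x y - h x c)).
    + intros x Hx. left. apply (Hd x c x y); try assumption.
      * pose proof (cond_pos d). split; lra.
      * change (Rabs (y - c) < d) in Hy. apply Rabs_lt_between in Hy. lra.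
      * rewrite Rminus_eq_0, Rabs_R0. apply cond_pos.
    + apply (@RInt_correct R_CompleteNormedModule).
      apply (ex_RInt_minus (fun x => h x y) (fun x => h x c));
        apply ex_RInt_continuous2_l, Hh.
  - apply (Rmult_lt_reg_r (L + 1)); [lra |].
    replace (L * (eps / (L + 1)) * (L + 1)) with (L * eps) by (field; lra).
    pose proof (cond_pos eps). nra.
Qed.

Lemma is_derive_RInt_upper (h : R -> R -> R) a t x :
  continuous2 h -> is_derive (fun u => RInt (fun y => h y t) a u) x (h x t).
Proof.
  intros Hh.
  apply (is_derive_RInt (fun y => h y t) _ a).
  - apply filter_forall. intros u.
    apply (@RInt_correct R_CompleteNormedModule), ex_RInt_continuous2_l, Hh.
  - apply continuous2_l, Hh.
Qed.

(* [K x := RInt_c^d RInt_a^x h] has derivative [RInt_c^d (h x)] by differentiation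
   under the integral sign; the FTC concludes. *)
Lemma RInt_RInt_swap (h : R -> R -> R) a b c d :
  continuous2 h ->
  RInt (fun x => RInt (fun t => h x t) c d) a b =
  RInt (fun t => RInt (fun x => h x t) a b) c d.
Proof.
  intros Hh.
  set (K := fun x => RInt (fun t => RInt (fun y => h y t) a x) c d).
  assert (HD : forall x t, Derive (fun u => RInt (fun y => h y t) a u) x = h x t)
    by (intros; apply is_derive_unique, is_derive_RInt_upper, Hh).
  assert (HK : forall x, is_derive K x (RInt (fun t => h x t) c d)).
  { intros x.
    rewrite (RInt_ext _ (fun t => Derive (fun u => RInt (fun y => h y t) a u) x))
      by (intros; rewrite HD; reflexivity).
    apply (is_derive_RInt_param (fun x t => RInt (fun y => h y t) a x)).
    - apply filter_forall. intros x' t _. eexists. exact (is_derive_RInt_upper h a t x' Hh).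
    - intros t _. apply continuity_2d_pt_ext with (f := h).
      + intros; rewrite HD; reflexivity.
      + apply continuity_2d_pt_filterlim, Hh.
    - apply filter_forall. intros u.
      apply (@ex_RInt_continuous R_CompleteNormedModule).
      intros t _. apply continuous_RInt_param, Hh. }
  assert (HKa : K a = 0).
  { unfold K. rewrite (RInt_ext _ (fun _ => 0)) by (intros; apply (RInt_point a (fun y => h y _))).
    rewrite RInt_const. apply Rmult_0_r. }
  rewrite (is_RInt_unique _ a b (minus (K b) (K a))).
  - rewrite HKa. apply Rminus_0_r.
  - apply (is_RInt_derive K).
    + intros x _. apply HK.
    + intros x _. apply (continuous_RInt_param (fun t x => h x t)), continuous2_swap, Hh.
Qed.

Lemma RInt_inv_sq (M T T' : R) : -1 < T -> -1 < T' ->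
  RInt (fun t => M / (1 + t) ^ 2) T T' = M * (/ (1 + T) - / (1 + T')).
Proof.
  intros HT HT'.
  assert (Hx : forall x, Rmin T T' <= x <= Rmax T T' -> 0 < 1 + x).
  { intros x Hx. pose proof (Rmin_glb_lt _ _ _ HT HT'). lra. }
  rewrite (is_RInt_unique _ T T' (minus (- M / (1 + T')) (- M / (1 + T)))).
  - change (- M / (1 + T') - - M / (1 + T) = M * (/ (1 + T) - / (1 + T'))).
    field. lra.
  - apply (is_RInt_derive (fun t => - M / (1 + t))).
    + intros x Hmx. specialize (Hx x Hmx). auto_derive; [lra | field; lra].
    + intros x Hmx. specialize (Hx x Hmx).
      apply (@ex_derive_continuous R_AbsRing R_NormedModule).
      auto_derive. rewrite Rmult_1_r. apply Rmult_integral_contrapositive; lra.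
Qed.

Lemma decay_nonneg (F : R -> R) (M : R) :
  (forall t, 0 <= t -> Rabs (F t) <= M / (1 + t) ^ 2) -> 0 <= M.
Proof.
  intros HF. specialize (HF 0 (Rle_refl 0)).
  pose proof (Rabs_pos (F 0)). replace ((1 + 0) ^ 2) with 1 in HF by ring. lra.
Qed.

Lemma inv_decay_lt (M T : R) (eps : posreal) :
  0 <= M -> M / eps <= T -> M / (1 + T) < eps.
Proof.
  intros HM HT. pose proof (cond_pos eps).
  assert (HMe : M <= eps * T).
  { apply (Rmult_le_compat_l eps) in HT; [| lra].
    replace (eps * (M / eps)) with M in HT by (field; lra). exact HT. }
  apply Rlt_div_l; nra.
Qed.

Lemma decay_transfer (C K S t : R) : 0 <= C -> 0 <= S -> 0 <= t ->
  (1 + t) ^ 2 <= K * (1 + S) -> C / (1 + S) <= C * K / (1 + t) ^ 2.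
Proof.
  intros HC HS Ht Hbound.
  apply (Rle_div_r (C / (1 + S)) (C * K) ((1 + t) ^ 2)); [apply pow_lt; lra |].
  replace (C / (1 + S) * (1 + t) ^ 2) with (C * (1 + t) ^ 2 / (1 + S)) by (field; lra).
  apply (Rle_div_l (C * (1 + t) ^ 2) (C * K) (1 + S)); [lra |].
  rewrite Rmult_assoc. apply Rmult_le_compat_l; assumption.
Qed.

Section QuadraticDecay.

Variables (F : R -> R) (M : R).
Hypothesis F_cont : forall t, continuous F t.
Hypothesis F_decay : forall t, 0 <= t -> Rabs (F t) <= M / (1 + t) ^ 2.

Let ex_RInt_F a b : ex_RInt F a b.
Proof. apply (@ex_RInt_continuous R_CompleteNormedModule). intros; apply F_cont. Qed.

Lemma RInt_decay_increment T T' : 0 <= T <= T' ->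
  Rabs (RInt F 0 T' - RInt F 0 T) <= M / (1 + T).
Proof.
  intros HT.
  rewrite <- (RInt_Chasles F 0 T T') by apply ex_RInt_F.
  change (Rabs (RInt F 0 T + RInt F T T' - RInt F 0 T) <= M / (1 + T)).
  rewrite Rplus_minus_l.
  apply Rle_trans with (RInt (fun t => M / (1 + t) ^ 2) T T').
  - apply Rle_trans with (RInt (fun t => Rabs (F t)) T T').
    + apply abs_RInt_le; [lra | apply ex_RInt_F].
    + apply RInt_le; [lra | apply (ex_RInt_norm F), ex_RInt_F | | ].
      * apply (@ex_RInt_continuous R_CompleteNormedModule). intros x Hx.
        rewrite Rmin_left, Rmax_right in Hx by lra.
        apply (@ex_derive_continuous R_AbsRing R_NormedModule).
        auto_derive. rewrite Rmult_1_r. apply Rmult_integral_contrapositive; lra.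
      * intros x Hx. apply F_decay. lra.
  - rewrite RInt_inv_sq by lra.
    assert (0 < / (1 + T')) by (apply Rinv_0_lt_compat; lra).
    pose proof (decay_nonneg F M F_decay). unfold Rdiv. nra.
Qed.

Lemma filterlim_RInt_decay :
  filterlim (fun T => RInt F 0 T) (Rbar_locally p_infty)
    (locally (RInt_gen F (at_point 0) (Rbar_locally p_infty))).
Proof.
  destruct (proj1 (filterlim_locally_cauchy (F := Rbar_locally p_infty)
                     (fun T => RInt F 0 T))) as [l Hl].
  { intros eps. exists (fun T => M / eps <= T). split.
    - exists (M / eps). intros; lra.
    - assert (HMe : 0 <= M / eps)
        by (apply Rdiv_le_0_compat; [apply (decay_nonneg F M F_decay) | apply cond_pos]).
      assert (Hinc : forall T T', M / eps <= T <= T' ->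
                       Rabs (RInt F 0 T' - RInt F 0 T) < eps).
      { intros T T' HT. eapply Rle_lt_trans; [apply RInt_decay_increment; lra |].
        apply inv_decay_lt; [apply (decay_nonneg F M F_decay) | lra]. }
      intros u v Hu Hv. change (Rabs (RInt F 0 v - RInt F 0 u) < eps).
      destruct (Rle_dec u v).
      + apply Hinc. lra.
      + rewrite Rabs_minus_sym. apply Hinc. lra. }
  replace (RInt_gen F (at_point 0) (Rbar_locally p_infty)) with l; [exact Hl |].
  symmetry. apply is_RInt_gen_unique.
  apply (filterlimi_lim_ext (fun ab : R * R => RInt F (fst ab) (snd ab))).
  - intros [a b]. apply (@RInt_correct R_CompleteNormedModule), ex_RInt_F.
  - apply filterlim_locally. intros eps.
    apply Filter_prod with (fun a => a = 0) (fun T => ball l eps (RInt F 0 T)).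
    + reflexivity.
    + apply (proj1 (filterlim_locally _ l) Hl).
    + intros a T -> HT. exact HT.
Qed.

Lemma RInt_gen_decay_tail T : 0 <= T ->
  Rabs (RInt_gen F (at_point 0) (Rbar_locally p_infty) - RInt F 0 T) <= M / (1 + T).
Proof.
  intros HT.
  apply (filterlim_le (F := Rbar_locally p_infty)
           (fun T' => Rabs (RInt F 0 T' - RInt F 0 T)) (fun _ => M / (1 + T))
           (Finite _) (Finite _)).
  - exists T. intros T' HT'. apply RInt_decay_increment. lra.
  - apply (filterlim_comp _ _ _ _ (fun x => Rabs (x - RInt F 0 T)) _ _ _ filterlim_RInt_decay).
    apply (continuous_comp (fun x => x - RInt F 0 T) Rabs).
    + apply (@ex_derive_continuous R_AbsRing R_NormedModule). auto_derive. exact I.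
    + apply continuous_Rabs.
  - apply filterlim_const.
Qed.

End QuadraticDecay.

(* The truncations [RInt (h x) 0 T] converge uniformly in [x], with error at most
   [M / (1 + T)], so the limit passes through the outer integral. *)
Lemma filterlim_RInt_RInt_gen (h : R -> R -> R) M a b :
  continuous2 h -> (forall x t, 0 <= t -> Rabs (h x t) <= M / (1 + t) ^ 2) ->
  filterlim (fun T => RInt (fun t => RInt (fun x => h x t) a b) 0 T) (Rbar_locally p_infty)
    (locally (RInt (fun x => RInt_gen (h x) (at_point 0) (Rbar_locally p_infty)) a b)).
Proof.
  intros Hh Hdecay.
  assert (Hcont : forall x t, continuous (h x) t) by (intros; apply continuous2_r, Hh).
  assert (HM : 0 <= M) by exact (decay_nonneg (h 0) M (Hdecay 0)).
  destruct (filterlim_RInt (fun T x => RInt (h x) 0 T) a b (Rbar_locally p_infty)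
              (Rbar_locally_filter _) (fun x => RInt_gen (h x) (at_point 0) (Rbar_locally p_infty))
              (fun T => RInt (fun x => RInt (h x) 0 T) a b)) as [I [HI HIab]].
  - intros T. apply (@RInt_correct R_CompleteNormedModule).
    apply (@ex_RInt_continuous R_CompleteNormedModule). intros x _.
    apply (continuous_RInt_param (fun t x => h x t)), continuous2_swap, Hh.
  - apply filterlim_locally. intros eps.
    exists (M / eps). intros T HT x.
    change (Rabs (RInt (h x) 0 T - RInt_gen (h x) (at_point 0) (Rbar_locally p_infty)) < eps).
    rewrite Rabs_minus_sym.
    eapply Rle_lt_trans; [apply (RInt_gen_decay_tail (h x) M (Hcont x) (Hdecay x)) |].
    + apply Rle_trans with (M / eps); [apply Rdiv_le_0_compat; [lra | apply cond_pos] | lra].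
    + apply inv_decay_lt; lra.
  - rewrite (is_RInt_unique _ _ _ _ HIab).
    eapply filterlim_ext; [| exact HI].
    intros T. apply RInt_RInt_swap, Hh.
Qed.

Lemma RInt_RInt_gen_ext (h1 h2 : R -> R -> R) M a b :
  continuous2 h1 -> continuous2 h2 ->
  (forall x t, 0 <= t -> Rabs (h1 x t) <= M / (1 + t) ^ 2) ->
  (forall x t, 0 <= t -> Rabs (h2 x t) <= M / (1 + t) ^ 2) ->
  (forall t, RInt (fun x => h1 x t) a b = RInt (fun x => h2 x t) a b) ->
  RInt (fun x => RInt_gen (h1 x) (at_point 0) (Rbar_locally p_infty)) a b =
  RInt (fun x => RInt_gen (h2 x) (at_point 0) (Rbar_locally p_infty)) a b.
Proof.
  intros H1 H2 D1 D2 Heq.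
  apply (filterlim_locally_unique
           (fun T => RInt (fun t => RInt (fun x => h1 x t) a b) 0 T) (F := Rbar_locally p_infty)).
  - apply (filterlim_RInt_RInt_gen h1 M); assumption.
  - eapply filterlim_ext; [| apply (filterlim_RInt_RInt_gen h2 M); eassumption].
    intros T. apply RInt_ext. intros t _. symmetry. apply Heq.
Qed.

Definition rotx (th a b : R) : R := cos th * a - sin th * b.
Definition roty (th a b : R) : R := sin th * a + cos th * b.

Lemma continuous2_rot (f : R -> R -> R) (p q : R -> R) :
  continuous2 f -> (forall t, continuous p t) -> (forall t, continuous q t) ->
  continuous2 (fun th t => f (rotx th (p t) (q t)) (roty th (p t) (q t))).
Proof.
  intros Hf Hp Hq th t.
  apply (continuous_comp_2 (fun z : R * R => rotx (fst z) (p (snd z)) (q (snd z)))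
           (fun z : R * R => roty (fst z) (p (snd z)) (q (snd z))) f); [| | apply Hf].
  - apply (continuous_minus (fun z : R * R => cos (fst z) * p (snd z))
                            (fun z : R * R => sin (fst z) * q (snd z)));
      apply continuous2_mult; auto using continuous_cos, continuous_sin.
  - apply (continuous_plus (fun z : R * R => sin (fst z) * p (snd z))
                           (fun z : R * R => cos (fst z) * q (snd z)));
      apply continuous2_mult; auto using continuous_cos, continuous_sin.
Qed.

Lemma rot_norm2 th a b : rotx th a b ^ 2 + roty th a b ^ 2 = a ^ 2 + b ^ 2.
Proof.
  unfold rotx, roty. pose proof (sin2_cos2 th). unfold Rsqr in H.
  transitivity ((sin th * sin th + cos th * cos th) * (a ^ 2 + b ^ 2)); [ring |].
  rewrite H. ring.
Qed.

Lemma rotx_add th ph a b : rotx (th + ph) a b = rotx th (rotx ph a b) (roty ph a b).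
Proof. unfold rotx, roty. rewrite cos_plus, sin_plus. ring. Qed.

Lemma roty_add th ph a b : roty (th + ph) a b = roty th (rotx ph a b) (roty ph a b).
Proof. unfold rotx, roty. rewrite cos_plus, sin_plus. ring. Qed.

Lemma cos_sin_onto p q : p ^ 2 + q ^ 2 = 1 -> exists th, cos th = p /\ sin th = q.
Proof.
  intros Hpq.
  assert (Hp : -1 <= p <= 1) by (split; nra).
  assert (Hs : sqrt (1 - p²) = Rabs q).
  { rewrite <- sqrt_Rsqr_abs. f_equal. unfold Rsqr. nra. }
  destruct (Rle_dec 0 q).
  - exists (acos p). rewrite cos_acos, sin_acos, Hs, Rabs_pos_eq by assumption. auto.
  - exists (- acos p). rewrite cos_neg, sin_neg, cos_acos, sin_acos, Hs, Rabs_left by lra.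
    split; [reflexivity | ring].
Qed.

(* The angle is read off the complex quotient (a' + i b') / (a + i b). *)
Lemma rot_onto a b a' b' : a' ^ 2 + b' ^ 2 = a ^ 2 + b ^ 2 ->
  exists ph, rotx ph a b = a' /\ roty ph a b = b'.
Proof.
  intros Hn. unfold rotx, roty.
  destruct (Req_dec (a ^ 2 + b ^ 2) 0) as [H0 | H0].
  - assert (a = 0 /\ b = 0 /\ a' = 0 /\ b' = 0) as (-> & -> & -> & ->)
      by (repeat split; nra).
    exists 0. split; ring.
  - destruct (cos_sin_onto ((a * a' + b * b') / (a ^ 2 + b ^ 2))
                           ((a * b' - b * a') / (a ^ 2 + b ^ 2))) as [ph [Hc Hs]].
    { transitivity ((a ^ 2 + b ^ 2) * (a' ^ 2 + b' ^ 2) / (a ^ 2 + b ^ 2) ^ 2).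
      - field. assumption.
      - rewrite Hn. field. assumption. }
    exists ph. rewrite Hc, Hs. split; field; assumption.
Qed.

Lemma RInt_shift (F : R -> R) c a b :
  (forall x, continuous F x) -> RInt (fun x => F (x + c)) a b = RInt F (a + c) (b + c).
Proof.
  intros HF.
  rewrite <- (Rmult_1_l a) at 2. rewrite <- (Rmult_1_l b) at 2.
  rewrite <- (RInt_comp_lin F 1 c a b).
  - apply RInt_ext. intros x _. change (F (x + c) = 1 * F (1 * x + c)).
    rewrite !Rmult_1_l. reflexivity.
  - apply (@ex_RInt_continuous R_CompleteNormedModule). intros; apply HF.
Qed.

Lemma RInt_periodic_shift (F : R -> R) P c :
  (forall x, continuous F x) -> (forall x, F (x + P) = F x) ->
  RInt (fun x => F (x + c)) 0 P = RInt F 0 P.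
Proof.
  intros HF HP.
  assert (Hex : forall a b, ex_RInt F a b)
    by (intros; apply (@ex_RInt_continuous R_CompleteNormedModule); intros; apply HF).
  assert (Hwrap : RInt F P (P + c) = RInt F 0 c).
  { transitivity (RInt (fun x => F (x + P)) 0 c).
    - rewrite RInt_shift, Rplus_0_l, (Rplus_comm c P) by assumption. reflexivity.
    - apply RInt_ext. intros; apply HP. }
  rewrite RInt_shift, Rplus_0_l by assumption.
  rewrite <- (RInt_Chasles F c 0 (P + c)), <- (RInt_Chasles F 0 P (P + c)), Hwrap
    by apply Hex.
  rewrite <- (opp_RInt_swap F 0 c) by apply Hex.
  change (- RInt F 0 c + (RInt F 0 P + RInt F 0 c) = RInt F 0 P). ring.
Qed.

Lemma RInt_circle_radial (f : R -> R -> R) a b a' b' :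
  continuous2 f -> a' ^ 2 + b' ^ 2 = a ^ 2 + b ^ 2 ->
  RInt (fun th => f (rotx th a' b') (roty th a' b')) 0 (2 * PI) =
  RInt (fun th => f (rotx th a b) (roty th a b)) 0 (2 * PI).
Proof.
  intros Hf Hn.
  destruct (rot_onto a b a' b' Hn) as [ph [<- <-]].
  rewrite (RInt_ext _ (fun th => f (rotx (th + ph) a b) (roty (th + ph) a b)))
    by (intros; rewrite rotx_add, roty_add; reflexivity).
  apply (RInt_periodic_shift (fun th => f (rotx th a b) (roty th a b))).
  - intros th. apply (continuous2_l (fun th (_ : R) => f (rotx th a b) (roty th a b)) 0).
    apply (continuous2_rot f (fun _ => a) (fun _ => b)); auto using continuous_const.
  - intros th. unfold rotx, roty. rewrite cos_plus, sin_plus, cos_2PI, sin_2PI. f_equal; ring.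
Qed.

Lemma rot_decay (f : R -> R -> R) C K a b th t :
  0 <= C -> (forall x y, Rabs (f x y) <= C / (1 + x ^ 2 + y ^ 2)) -> 0 <= t ->
  (1 + t) ^ 2 <= K * (1 + (a ^ 2 + b ^ 2)) ->
  Rabs (f (rotx th a b) (roty th a b)) <= C * K / (1 + t) ^ 2.
Proof.
  intros HC Hf Ht Hab.
  eapply Rle_trans; [apply Hf |].
  rewrite Rplus_assoc, rot_norm2.
  apply decay_transfer; try assumption.
  apply Rplus_le_le_0_compat; apply pow2_ge_0.
Qed.

Lemma schwartz_decay (f : R -> R -> R) : schwartz f ->
  exists C, 0 <= C /\ forall x y, Rabs (f x y) <= C / (1 + x ^ 2 + y ^ 2).
Proof.
  intros [_ [_ Hbound]].
  destruct (Hbound nil 0%nat 0%nat) as [C0 H0].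
  destruct (Hbound nil 2%nat 0%nat) as [C1 H1].
  destruct (Hbound nil 0%nat 2%nat) as [C2 H2].
  assert (HC : forall x y, Rabs (f x y) * (1 + x ^ 2 + y ^ 2) <= C0 + C1 + C2).
  { intros x y. specialize (H0 x y). specialize (H1 x y). specialize (H2 x y).
    cbn [Dw] in H0, H1, H2.
    rewrite Rabs_mult, Rabs_pos_eq in H0, H1, H2 by (simpl; nra). simpl in *. nra. }
  exists (C0 + C1 + C2). split.
  - specialize (HC 0 0). pose proof (Rabs_pos (f 0 0)). nra.
  - intros x y. apply Rle_div_r; [nra |]. apply HC.
Qed.

Definition ray_len (r u : R) : R := sqrt (u ^ 2 + r ^ 2).

(* Unit-speed ray from the source [(r, 0)] through the detector point [(0, u)],
   in the rotating frame [(theta_beta, theta_beta^perp)]. *)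
Definition ray_x (r u t : R) : R := r - t * r / ray_len r u.
Definition ray_y (r u t : R) : R := t * u / ray_len r u.

Lemma fanbeam_rot r f u be : fanbeam r f u be =
  RInt_gen (fun t => f (rotx be (ray_x r u t) (ray_y r u t)) (roty be (ray_x r u t) (ray_y r u t)))
    (at_point 0) (Rbar_locally p_infty).
Proof.
  unfold fanbeam, ray_x, ray_y, ray_len, rotx, roty.
  replace ((- u * sin be - r * cos be) ^ 2 + (u * cos be - r * sin be) ^ 2)
    with (rotx be (- r) (- u) ^ 2 + roty be (- r) (- u) ^ 2) by (unfold rotx, roty; ring).
  rewrite rot_norm2. replace ((- r) ^ 2 + (- u) ^ 2) with (u ^ 2 + r ^ 2) by ring.
  f_equal. apply functional_extensionality. intros t. f_equal; unfold Rdiv; ring.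
Qed.

Lemma ray_len_pos r u : 0 < r -> 0 < ray_len r u.
Proof. intros Hr. apply sqrt_lt_R0. nra. Qed.

Lemma ray_len_opp r u : ray_len r (- u) = ray_len r u.
Proof. unfold ray_len. f_equal. ring. Qed.

Lemma ray_decay r u t : 0 < r -> 0 <= t ->
  (1 + t) ^ 2 <= 2 * (1 + r) ^ 2 * (1 + (ray_x r u t ^ 2 + ray_y r u t ^ 2)).
Proof.
  intros Hr Ht.
  set (N := ray_len r u).
  assert (HN : 0 < N) by apply ray_len_pos, Hr.
  assert (HN2 : N ^ 2 = u ^ 2 + r ^ 2) by (apply pow2_sqrt; nra).
  set (p := r ^ 2 / N).
  assert (Hp : 0 <= p <= r).
  { unfold p. split; [apply Rdiv_le_0_compat; nra |].
    apply Rle_div_l; [lra |]. nra. }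
  assert (Hpt : ray_x r u t ^ 2 + ray_y r u t ^ 2 = (t - p) ^ 2 + (r * u / N) ^ 2).
  { unfold ray_x, ray_y, p. fold N.
    transitivity ((t - r ^ 2 / N) ^ 2 + (r * u / N) ^ 2
                  + (t ^ 2 - r ^ 2) * (u ^ 2 + r ^ 2 - N ^ 2) / N ^ 2); [field; lra |].
    rewrite <- HN2. field. lra. }
  rewrite Hpt.
  assert (Hsplit : (1 + t) ^ 2 <= 2 * (1 + p) ^ 2 + 2 * (t - p) ^ 2)
    by (pose proof (pow2_ge_0 (1 + p - (t - p))); nra).
  assert (Hr1 : 1 <= (1 + r) ^ 2) by nra.
  assert ((1 + p) ^ 2 <= (1 + r) ^ 2) by (apply pow_incr; lra).
  pose proof (pow2_ge_0 (r * u / N)). pose proof (pow2_ge_0 (t - p)). nra.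
Qed.

Lemma RInt_fanbeam_reflect r f u c : 0 < r -> schwartz f ->
  RInt (fun be => fanbeam r f u be) 0 (2 * PI) =
  RInt (fun be => fanbeam r f (- u) (be + c)) 0 (2 * PI).
Proof.
  intros Hr Hf.
  destruct (schwartz_decay f Hf) as [C [HC Hdecay]].
  assert (Hfc : continuous2 f) by exact (proj1 (proj2 Hf) nil).
  set (A := ray_x r u). set (B := ray_y r u).
  (* The reflected ray rotated by [c], which is swept by [fanbeam r f (- u) (be + c)]. *)
  set (A' := fun t => rotx c (A t) (- B t)). set (B' := fun t => roty c (A t) (- B t)).
  assert (HN := ray_len_pos r u Hr).
  assert (Hcont : forall p : R -> R, (forall t, ex_derive p t) -> forall t, continuous p t)
    by (intros; apply (@ex_derive_continuous R_AbsRing R_NormedModule); auto).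
  assert (Hnorm : forall t, A' t ^ 2 + B' t ^ 2 = A t ^ 2 + B t ^ 2)
    by (intros; unfold A', B'; rewrite rot_norm2; ring).
  rewrite (RInt_ext (fun be => fanbeam r f u be)) with
    (g := fun be => RInt_gen (fun t => f (rotx be (A t) (B t)) (roty be (A t) (B t)))
                      (at_point 0) (Rbar_locally p_infty))
    by (intros; apply fanbeam_rot).
  rewrite (RInt_ext (fun be => fanbeam r f (- u) (be + c))) with
    (g := fun be => RInt_gen (fun t => f (rotx be (A' t) (B' t)) (roty be (A' t) (B' t)))
                      (at_point 0) (Rbar_locally p_infty)).
  2:{ intros be _. rewrite fanbeam_rot. f_equal. apply functional_extensionality. intros t.
      unfold A', B', A, B, ray_x, ray_y. rewrite ray_len_opp, rotx_add, roty_add.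
      replace (t * - u / ray_len r u) with (- (t * u / ray_len r u)) by (unfold Rdiv; ring).
      reflexivity. }
  apply (RInt_RInt_gen_ext _ _ (C * (2 * (1 + r) ^ 2))).
  - apply continuous2_rot; [assumption | |]; apply Hcont; intros;
      unfold A, B, ray_x, ray_y; auto_derive; lra.
  - apply continuous2_rot; [assumption | |]; apply Hcont; intros;
      unfold A', B', A, B, rotx, roty, ray_x, ray_y; auto_derive; lra.
  - intros be t Ht. apply rot_decay; try assumption. apply ray_decay; assumption.
  - intros be t Ht. apply rot_decay; try assumption. rewrite Hnorm. apply ray_decay; assumption.
  - intros t. symmetry. apply RInt_circle_radial; [assumption | apply Hnorm].
Qed.

Theorem proposition1 (r : R) (f : R -> R -> R) (hstar : R) :
  0 < r -> schwartz f ->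
  let gt := fun s beta => fanbeam r f (s - hstar) beta in
  let pt := fun s => RInt (fun beta => gt s beta) 0 (2 * PI) in
  let w := fun s => RInt (fun beta => gt (- s) (beta + PI + 2 * atan (s / r))) 0 (2 * PI) in
  forall s : R, pt s = w (s - 2 * hstar).
Proof.
  intros Hr Hf gt pt w s. unfold pt, w, gt.
  rewrite (RInt_fanbeam_reflect r f (s - hstar) (PI + 2 * atan ((s - 2 * hstar) / r)) Hr Hf).
  apply RInt_ext. intros be _. f_equal; ring.
Qed.
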